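(* Let the user types be drawn from a distribution $\mathcal D_U$ and the creator types from a distribution $\mathcal D_C$ (arbitrary distributions on non-negative unit vectors of $\mathbb R^D$), and let $\epsilon:=\Pr(\mathrm{LTE}(\mathbf{FL})=0)$. For any values of $U,C,K,D,\bar e,\bar a$ with $C\ge K$, $U\ge\bar a$ and $\epsilon<1$, $$\mathbb E\left[\frac{\mathrm{LTE}(\mathbf{UC})}{\mathrm{LTE}(\mathbf{FL})}\,\middle|\,\mathrm{LTE}(\mathbf{FL})>0\right]\le\frac{1}{1-\epsilon}\Pr\left(\text{at least }K\text{ creators stay after }t=0\text{ under }UC_0\right),$$ where ''at least $K$ creators stay after $t=0$ under $UC_0$'' means $|\mathcal C_1|\ge K$ when the user-centric recommendation $UC_0$ is used at $t=0$.
   Context: An instance consists of a dimension $D$, users $\mathcal U_0=\{1,\dots,U\}$ with types $u_i\in\mathbb R^D_{\ge0}$, creators $\mathcal C_0=\{1,\dots,C\}$ with types $c_j\in\mathbb R^D_{\ge 0}$, all of Euclidean norm $1$, a positive integer $K$, a creator threshold $\bar a\in\mathbb N_0$ and a user threshold $\bar e\in[0,1]$. At time $t=0,1,\dots$ the platform has sets $\mathcal U_t,\mathcal C_t$ and chooses $R_t$ assigning each $i\in\mathcal U_t$ a set $R_t(i)\subseteq\mathcal C_t$ of size $K$ (smaller only if necessary). Engagement $E(\mathcal U,\mathcal C,R)=\sum_{i\in\mathcal U}\sum_{j\in R(i)}u_i^Tc_j$. Then $\mathcal U_{t+1}=\{i\in\mathcal U_t:|R_t(i)|=K,\ u_i^Tc_j\ge\bar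 e\ \forall j\in R_t(i)\}$, $\mathcal C_{t+1}=\{j\in\mathcal C_t:|\{i\in\mathcal U_t:j\in R_t(i)\}|\ge\bar a\}$. $\mathrm{LTE}(\mathbf R)=\lim_{T\to\infty}\frac1T\sum_{t<T}E(\mathcal U_t,\mathcal C_t,R_t)$. $\mathbf{FL}$ is any sequence maximizing $\mathrm{LTE}$; $\mathbf{UC}$ is the sequence with $UC_t(i)\in\arg\max_{S\subseteq\mathcal C_t,|S|\le K}\sum_{j\in S}u_i^Tc_j$. *)

From mathcomp Require Import all_boot all_order all_algebra.
From mathcomp Require Import all_classical all_reals all_analysis.

Set Implicit Arguments.
Unset Strict Implicit.
Unset Printing Implicit Defensive.

Import Order.TTheory GRing.Theory Num.Theory.
Import numFieldNormedType.Exports.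
Local Open Scope ring_scope.
Local Open Scope classical_set_scope.

Definition dotp {R : realType} {D : nat} (u c : D.-tuple R) : R :=
  \sum_(k < D) tnth u k * tnth c k.

Definition nonneg_unit {R : realType} {D : nat} : set (D.-tuple R) :=
  [set v | (forall k : 'I_D, 0 <= tnth v k) /\ \sum_(k < D) tnth v k ^+ 2 = 1].

Definition recom (U C : nat) := 'I_U -> {set 'I_C}.
Definition state (U C : nat) := ({set 'I_U} * {set 'I_C})%type.

Definition init_state (U C : nat) : state U C := ([set: 'I_U]%SET, [set: 'I_C]%SET).

Definition valid_recom (U C K : nat) (s : state U C) (r : recom U C) : Prop :=
  forall i, i \in s.1 -> r i \subset s.2 /\ #|r i| = minn K #|s.2|.

Section Dyn.
Variables (R : realType) (D U C K abar : nat) (ebar : R).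
Variables (ut : 'I_U -> D.-tuple R) (ct : 'I_C -> D.-tuple R).

Definition engagement (s : state U C) (r : recom U C) : R :=
  \sum_(i in s.1) \sum_(j in r i) dotp (ut i) (ct j).

Definition step (s : state U C) (r : recom U C) : state U C :=
  ([set i in s.1 | (#|r i| == K) && [forall j in r i, ebar <= dotp (ut i) (ct j)]],
   [set j in s.2 | (abar <= #|[set i in s.1 | j \in r i]|)%N]).

Fixpoint traj (rs : nat -> recom U C) (t : nat) : state U C :=
  match t with
  | 0 => init_state U C
  | t'.+1 => step (traj rs t') (rs t')
  end.

Definition valid_seq (rs : nat -> recom U C) : Prop :=
  forall t, valid_recom K (traj rs t) (rs t).

Definition avg_eng (rs : nat -> recom U C) (T : nat) : R :=
  T%:R^-1 * \sum_(t < T) engagement (traj rs t) (rs t).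

Definition LTE (rs : nat -> recom U C) : R := limn (avg_eng rs).

Definition achievable_LTE : set R :=
  [set l | exists rs, valid_seq rs /\ avg_eng rs @ \oo --> l].

Definition LTE_FL : R := sup achievable_LTE.

Definition uc_opt (s : state U C) (i : 'I_U) (S : {set 'I_C}) : bool :=
  [&& S \subset s.2, #|S| == minn K #|s.2| &
      [forall S' : {set 'I_C}, (S' \subset s.2) && (#|S'| <= K)%N ==>
         (\sum_(j in S') dotp (ut i) (ct j) <= \sum_(j in S) dotp (ut i) (ct j))]].

Definition uc_recom (s : state U C) : recom U C :=
  fun i => odflt (finset.set0 : {set 'I_C}) [pick S | uc_opt s i S].

Fixpoint uc_state (t : nat) : state U C :=
  match t with
  | 0 => init_state U C
  | t'.+1 => step (uc_state t') (uc_recom (uc_state t'))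
  end.

Definition UC_seq : nat -> recom U C := fun t => uc_recom (uc_state t).

Definition LTE_UC : R := LTE UC_seq.

Definition K_creators_stay : Prop :=
  (K <= #|(step (init_state U C) (uc_recom (init_state U C))).2|)%N.

End Dyn.

Definition mutually_independent {d dV : measure_display}
  {Omega : measurableType d} {V : measurableType dV} {R : realType}
  (P : probability Omega R) {I : finType} (X : I -> Omega -> V) : Prop :=
  forall (J : {set I}) (A : I -> set V),
    (forall k, measurable (A k)) ->
    P (\big[setI/setT]_(k in J) (X k @^-1` A k)) =
    (\prod_(k in J) P (X k @^-1` A k))%E.

Definition cond_expectation {d : measure_display} {Omega : measurableType d}
  {R : realType} (P : probability Omega R) (X : Omega -> R) (A : set Omega)
  : \bar R :=
  ('E_P[fun w => (X w * \1_A w)%R] * ((fine (P A))^-1)%:E)%E.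

From Pilot Require Import Defs.
From mathcomp Require Import all_boot all_order all_algebra.
From mathcomp Require Import all_classical all_reals all_analysis.
From mathcomp Require Import measurable_realfun.
Import Order.TTheory GRing.Theory Num.Theory.
Import numFieldNormedType.Exports.
Local Open Scope ring_scope.
Local Open Scope classical_set_scope.

(* On the almost sure event that all affinities u_i^T c_j are non-negative,
   the user-centric sequence is a valid recommendation sequence, so
   0 <= LTE(UC) <= LTE(FL); and if fewer than K creators survive t = 0, every
   user has left by t = 2, so LTE(UC) = 0.  Hence LTE(UC)/LTE(FL) restricted to
   {LTE(FL) > 0} is a.s. below the indicator of "K creators stay", while
   P(LTE(FL) > 0) = 1 - eps.
   Trajectories decrease, so they become stationary, and an eventually constant
   sequence has its eventual engagement as Cesaro limit.  Consequently LTE(FL)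
   is a supremum over countably many finitely described sequences, and all the
   dynamics depends on the types only through finitely many comparisons of
   affinities, which gives the measurability of every quantity involved. *)

Lemma nonincreasing_stationary (f : nat -> nat) : (forall t, f t.+1 <= f t)%N ->
  exists t0, forall t, (t0 <= t)%N -> f t = f t0.
Proof.
move=> f_dec.
have f_noninc : {homo f : m n / (m <= n)%N >-> (n <= m)%N}.
  by apply: homo_leq => // ? ? ? /[swap]; exact: leq_trans.
have f_val : exists n, `[< exists t, f t = n >] by exists (f 0); apply/asboolP; exists 0%N.
case: (ex_minnP f_val) => m /asboolP [t0 ft0] m_min.
exists t0 => t t0t; apply/eqP; rewrite eqn_leq f_noninc // ft0.
by apply: m_min; apply/asboolP; exists t.
Qed.

Lemma card_extend {T : finType} {A B : {set T}} {n} : A \subset B ->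
  (#|A| <= n <= #|B|)%N -> exists S : {set T}, [/\ A \subset S, S \subset B & #|S| = n].
Proof.
elim: n => [|n IHn] AB /andP [An nB].
  by exists A; split=> //; apply/eqP; rewrite -leqn0.
have [An'|nA] := leqP #|A| n; last first.
  by exists A; split=> //; apply/eqP; rewrite eqn_leq An nA.
have [S [AS SB cardS]] := IHn AB (ltac:(by rewrite An' ltnW)).
have /fintype.subsetPn [x xB xS] : ~~ (B \subset S).
  by apply: contraTN nB => /subset_leq_card; rewrite cardS -ltnNge ltnS.
exists (x |: S); split; last by rewrite cardsU1 xS cardS.
- exact: fintype.subset_trans AS (finset.subsetUr _ _).
- by rewrite finset.subUset finset.sub1set xB.
Qed.

Section Cesaro.
Context {R : realType}.

Definition prefix_mean (u : R ^nat) (T : nat) : R := T%:R^-1 * \sum_(t < T) u t.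

Lemma prefix_mean_eventually_const (u : R ^nat) t0 c :
  (forall t, (t0 <= t)%N -> u t = c) -> prefix_mean u @ \oo --> c.
Proof.
move=> u_c; rewrite -cvg_shiftS.
have -> : [sequence prefix_mean u n.+1]_n = arithmetic_mean u.
  by apply/funext => n; rewrite /prefix_mean /arithmetic_mean /series /= big_mkord.
apply: cesaro; apply: cvg_near_cst; near=> t; apply: u_c; near: t.
by exists t0.
Unshelve. all: end_near.
Qed.

Lemma prefix_mean_lim_le (u : R ^nat) t0 x l :
  (forall t, (t0 <= t)%N -> u t <= x) -> prefix_mean u @ \oo --> l -> l <= x.
Proof.
move=> u_le ul.
pose v t := if (t < t0)%N then u t else x.
have vx : prefix_mean v @ \oo --> x.
  by apply: (@prefix_mean_eventually_const v t0) => t; rewrite /v ltnNge => ->.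
rewrite -(cvg_lim _ ul) // -(cvg_lim _ vx) //.
apply: ler_lim; [by apply/cvg_ex; exists l|by apply/cvg_ex; exists x|].
near=> T; rewrite ler_wpM2l ?invr_ge0 ?ler0n //.
apply: ler_sum => t _; rewrite /v; case: ltnP => // /u_le; exact.
Unshelve. all: end_near.
Qed.

End Cesaro.

Lemma ler_psum_subpred (R : numDomainType) (T : finType) (P Q : pred T) (F : T -> R) :
  (forall x, 0 <= F x) -> subpred P Q -> \sum_(x | P x) F x <= \sum_(x | Q x) F x.
Proof.
move=> F_ge0 PQ; rewrite [leLHS]big_mkcond [leRHS]big_mkcond /=.
apply: ler_sum => x _; case: ifP => [/PQ -> //|_]; by case: ifP.
Qed.

(* A recommendation sequence that is constant from index [size q.1] on, coded by
   its first values and its final value; codes form a countable type. *)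
Definition rcode (U C : nat) :=
  (seq {ffun 'I_U -> {set 'I_C}} * {ffun 'I_U -> {set 'I_C}})%type.

Definition code_seq {U C : nat} (q : rcode U C) : nat -> recom U C :=
  fun t i => nth q.2 q.1 t i.

Definition truncation {U C : nat} (rs : nat -> recom U C) (t : nat) : rcode U C :=
  (mkseq (fun k => finfun (rs k)) t, finfun (rs t)).

Section Dynamics.
Context {R : realType} {D U C : nat}.
Variables (K abar : nat) (ebar : R).
Variables (ut : 'I_U -> D.-tuple R) (ct : 'I_C -> D.-tuple R).

Local Notation step := (step K abar ebar ut ct).
Local Notation traj := (traj K abar ebar ut ct).
Local Notation engagement := (engagement ut ct).
Local Notation valid_seq := (valid_seq K abar ebar ut ct).
Local Notation avg_eng := (avg_eng K abar ebar ut ct).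
Local Notation LTE := (LTE K abar ebar ut ct).
Local Notation achievable := (achievable_LTE K abar ebar ut ct).
Local Notation LTE_FL := (LTE_FL K abar ebar ut ct).

Lemma step_subset s r : (step s r).1 \subset s.1 /\ (step s r).2 \subset s.2.
Proof. by split; apply/fintype.subsetP => x; rewrite inE => /andP []. Qed.

Lemma traj_subset rs t t' : (t <= t')%N ->
  (traj rs t').1 \subset (traj rs t).1 /\ (traj rs t').2 \subset (traj rs t).2.
Proof.
apply: (homo_leq (r := fun s s' : state U C => s'.1 \subset s.1 /\ s'.2 \subset s.2)).
- by move=> s; rewrite !subxx.
- move=> s2 s1 s3 [sub21 sub21'] [sub32 sub32'].
  by split; [exact: fintype.subset_trans sub32 sub21|exact: fintype.subset_trans sub32' sub21'].
- by move=> t0; exact: step_subset.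
Qed.

Lemma traj_stationary rs : exists t0, forall t, (t0 <= t)%N -> traj rs t = traj rs t0.
Proof.
pose size_at t := (#|(traj rs t).1| + #|(traj rs t).2|)%N.
have [t0 t0_stat] : exists t0, forall t, (t0 <= t)%N -> size_at t = size_at t0.
  apply: nonincreasing_stationary => t; have [sub1 sub2] := step_subset (traj rs t) (rs t).
  by rewrite /size_at leq_add // subset_leq_card.
exists t0 => t t0t; have [sub1 sub2] := @traj_subset rs t0 t t0t.
have := t0_stat t t0t; rewrite /size_at.
move: (subset_leq_card sub1) (subset_leq_card sub2) => card1 card2 cards.
have /eqP eq1 : (traj rs t).1 == (traj rs t0).1.
  by rewrite eqEcard sub1 -(leq_add2r #|(traj rs t).2|) cards leq_add2l.
have /eqP eq2 : (traj rs t).2 == (traj rs t0).2.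
  by rewrite eqEcard sub2 -(leq_add2l #|(traj rs t).1|) cards leq_add2r.
by rewrite [traj rs t]surjective_pairing eq1 eq2 -surjective_pairing.
Qed.

Lemma LTE_eventually_eq rs t0 c :
  (forall t, (t0 <= t)%N -> engagement (traj rs t) (rs t) = c) ->
  avg_eng rs @ \oo --> c /\ LTE rs = c.
Proof.
move=> eng_c; have cv := prefix_mean_eventually_const _ _ _ eng_c.
by split => //; rewrite /Defs.LTE (cvg_lim _ cv).
Qed.

Lemma LTE_eventually_const rs m r : (forall t, (m <= t)%N -> rs t = r) ->
  exists t1, avg_eng rs @ \oo --> engagement (traj rs t1) (rs t1) /\
             LTE rs = engagement (traj rs t1) (rs t1).
Proof.
move=> rs_r; have [t0 t0_stat] := traj_stationary rs.
exists (maxn m t0); apply: (LTE_eventually_eq rs (maxn m t0)) => t.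
rewrite geq_max => /andP [mt t0t]; by rewrite !rs_r ?leq_maxl // !t0_stat ?leq_maxr.
Qed.

Definition engagement_bound : R := \sum_i \sum_j `|dotp (ut i) (ct j)|.

Lemma engagement_le_bound s r : engagement s r <= engagement_bound.
Proof.
apply: (@le_trans _ _ (\sum_(i in s.1) \sum_j `|dotp (ut i) (ct j)|)).
  apply: ler_sum => i _; apply: (le_trans (ler_sum _ (fun j _ => ler_norm _))).
  by apply: ler_psum_subpred => // j.
by apply: ler_psum_subpred => // i; apply: sumr_ge0.
Qed.

Lemma achievable_le_bound v : achievable v -> v <= engagement_bound.
Proof.
move=> [rs [_ rs_v]].
exact: (prefix_mean_lim_le (fun t => engagement (traj rs t) (rs t)) 0%N _ _
  (fun t _ => engagement_le_bound _ _) rs_v).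
Qed.

Lemma achievable_has_ubound : has_ubound achievable.
Proof. by exists engagement_bound => v /achievable_le_bound. Qed.

Lemma code_seq_LTE (q : rcode U C) : exists t1,
  avg_eng (code_seq q) @ \oo --> engagement (traj (code_seq q) t1) (code_seq q t1) /\
  LTE (code_seq q) = engagement (traj (code_seq q) t1) (code_seq q t1).
Proof.
apply: (LTE_eventually_const (code_seq q) (size q.1) q.2) => t qt.
by apply/funext => i; rewrite /code_seq nth_default.
Qed.

Lemma achievable_code (q : rcode U C) :
  valid_seq (code_seq q) -> achievable (LTE (code_seq q)).
Proof.
by move=> q_valid; have [t1 [cv ->]] := code_seq_LTE q; exists (code_seq q).
Qed.

Lemma code_seq_truncation (rs : nat -> recom U C) t k :
  code_seq (truncation rs t) k = rs (minn k t).
Proof.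
apply/funext => i; rewrite /code_seq /=; case: (ltnP k t) => [kt|tk].
  by rewrite nth_mkseq // ffunE.
by rewrite nth_default ?size_mkseq // ffunE.
Qed.

Lemma traj_truncation rs t k : traj rs t.+1 = traj rs t ->
  traj (code_seq (truncation rs t)) k = traj rs (minn k t).
Proof.
move=> rs_stat; elim: k => [|k IHk]; first by rewrite min0n.
rewrite /= IHk code_seq_truncation; case: (ltnP k t) => [kt|tk].
  by rewrite (minn_idPl kt).
by rewrite (minn_idPr (leqW tk)); exact: rs_stat.
Qed.

Lemma truncation_valid_LTE {rs t} : valid_seq rs -> traj rs t.+1 = traj rs t ->
  valid_seq (code_seq (truncation rs t)) /\
  LTE (code_seq (truncation rs t)) = engagement (traj rs t) (rs t).
Proof.
move=> rs_valid rs_stat; split.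
  by move=> k; rewrite code_seq_truncation traj_truncation.
apply: (proj2 (LTE_eventually_eq _ t _ _)) => k tk.
by rewrite code_seq_truncation traj_truncation // (minn_idPr tk).
Qed.

Lemma achievable_gt_code c : (exists2 v, achievable v & c < v) <->
  (exists2 q : rcode U C, valid_seq (code_seq q) & c < LTE (code_seq q)).
Proof.
split=> [[v [rs [rs_valid rs_v]] cv]|[q q_valid cq]]; last first.
  by exists (LTE (code_seq q)) => //; exact: achievable_code.
have [t0 t0_stat] := traj_stationary rs.
apply: contrapT => no_code.
suff : v <= c by rewrite leNgt cv.
apply: (prefix_mean_lim_le (fun t => engagement (traj rs t) (rs t)) t0 _ _ _ rs_v).
move=> t t0t; rewrite leNgt; apply/negP => c_lt; apply: no_code.
have rs_stat : traj rs t.+1 = traj rs t by rewrite !t0_stat // leqW.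
have [q_valid q_LTE] := truncation_valid_LTE rs_valid rs_stat.
by exists (truncation rs t); rewrite ?q_LTE.
Qed.

(* Without valid sequences, [LTE_FL] is [sup set0 = 0]. *)
Lemma LTE_FL_gt c : c < LTE_FL <->
  (c < 0 /\ forall q : rcode U C, ~ valid_seq (code_seq q)) \/
  (exists2 q : rcode U C, valid_seq (code_seq q) & c < LTE (code_seq q)).
Proof.
rewrite /Defs.LTE_FL.
case: (pselect (exists q : rcode U C, valid_seq (code_seq q))) => [[q0 q0_valid]|no_code].
  have ach_ne : achievable !=set0 by exists (LTE (code_seq q0)); exact: achievable_code.
  rewrite -achievable_gt_code; split=> [/(sup_gt ach_ne) [v ach_v cv]|]; first by right; exists v.
  case=> [[_ /(_ q0)] //|[v ach_v cv]].
  exact: lt_le_trans cv (ub_le_sup achievable_has_ubound ach_v).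
have -> : achievable = set0.
  apply/seteqP; split => // v ach_v; apply: no_code.
  have [|q q_valid _] := (achievable_gt_code (v - 1)).1; last by exists q.
  by exists v; rewrite // ltrBlDr ltrDl.
rewrite sup0; split=> [c0|[[] //|[q q_valid _]]]; last by case: no_code; exists q.
by left; split=> // q q_valid; apply: no_code; exists q.
Qed.

Local Notation uc_state := (uc_state K abar ebar ut ct).
Local Notation uc_recom := (uc_recom K ut ct).
Local Notation uc_opt := (uc_opt K ut ct).
Local Notation UC_seq := (UC_seq K abar ebar ut ct).
Local Notation LTE_UC := (LTE_UC K abar ebar ut ct).

Lemma uc_state_traj t : uc_state t = traj UC_seq t.
Proof. by elim: t => [//|t IHt] /=; rewrite -IHt. Qed.

Lemma LTE_UC_eventual : exists t1,
  avg_eng UC_seq @ \oo --> engagement (traj UC_seq t1) (UC_seq t1) /\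
  LTE_UC = engagement (traj UC_seq t1) (UC_seq t1).
Proof.
have [t0 t0_stat] := traj_stationary UC_seq.
apply: (LTE_eventually_const UC_seq t0 (uc_recom (traj UC_seq t0))) => t t0t.
by rewrite /Defs.UC_seq uc_state_traj t0_stat.
Qed.

(* If fewer than [K] creators survive [t = 0], every user receives fewer than
   [K] creators at [t = 1] and has left by [t = 2]. *)
Lemma LTE_UC_eq0 : (0 < K)%N -> ~ K_creators_stay K abar ebar ut ct -> LTE_UC = 0.
Proof.
move=> K_gt0 /negP; rewrite -ltnNge => few_creators.
have no_users : (uc_state 2).1 = finset.set0.
  apply/setP => i; rewrite [uc_state 2]/= inE finset.in_set0; apply/negbTE.
  rewrite negb_and negb_and /Defs.uc_recom; apply/orP; right; apply/orP; left.
  case: pickP => [S /and3P [_ /eqP -> _]|_] /=; last by rewrite cards0 eq_sym -lt0n.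
  by rewrite (minn_idPr (ltnW few_creators)) neq_ltn few_creators.
apply: (proj2 (LTE_eventually_eq UC_seq 2 0 _)) => t t2.
have [sub1 _] := @traj_subset UC_seq 2 t t2.
move: sub1; rewrite -uc_state_traj no_users finset.subset0 => /eqP users_t.
by rewrite /Defs.engagement users_t big_set0.
Qed.

Section NonnegativeAffinity.
Hypothesis dotp_ge0 : forall i j, 0 <= dotp (ut i) (ct j).

Lemma uc_opt_exists s i : exists S, uc_opt s i S.
Proof.
pose m := minn K #|s.2|.
pose size_m := fun S : {set 'I_C} => (S \subset s.2) && (#|S| == m).
pose gain := fun S : {set 'I_C} => \sum_(j in S) dotp (ut i) (ct j).
have [S0 [_ S0s cardS0]] := @card_extend _ finset.set0 s.2 m (finset.sub0set _)
  (ltac:(by rewrite cards0 geq_minr)).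
have size_S0 : size_m S0 by rewrite /size_m S0s cardS0 eqxx.
case: (arg_maxP gain size_S0) => S /andP [Ss /eqP cardS] S_max.
exists S; rewrite /Defs.uc_opt Ss cardS eqxx /=.
apply/forallP => S'; apply/implyP => /andP [S's S'K].
have S'm : (#|S'| <= m <= #|s.2|)%N by rewrite geq_minr leq_min S'K subset_leq_card.
have [S'' [S'S'' S''s cardS'']] := card_extend S's S'm.
apply: (@le_trans _ _ (gain S'')).
  by apply: ler_psum_subpred => // j; exact: (fintype.subsetP S'S'').
by apply: S_max; rewrite /size_m S''s cardS'' eqxx.
Qed.

Lemma uc_recom_opt s i : uc_opt s i (uc_recom s i).
Proof.
rewrite /Defs.uc_recom; case: pickP => [S //|no_opt].
by have [S] := uc_opt_exists s i; rewrite no_opt.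
Qed.

Lemma UC_valid : valid_seq UC_seq.
Proof.
move=> t i _; rewrite [UC_seq t]/Defs.UC_seq uc_state_traj.
by have /and3P [? /eqP ? _] := uc_recom_opt (traj UC_seq t) i.
Qed.

Lemma engagement_ge0 s r : 0 <= engagement s r.
Proof. by apply: sumr_ge0 => i _; apply: sumr_ge0. Qed.

Lemma LTE_UC_ge0 : 0 <= LTE_UC.
Proof. by have [t1 [_ ->]] := LTE_UC_eventual; exact: engagement_ge0. Qed.

Lemma LTE_UC_le_FL : LTE_UC <= LTE_FL.
Proof.
apply: ub_le_sup; first exact: achievable_has_ubound.
have [t1 [cv ->]] := LTE_UC_eventual.
by exists UC_seq; split; [exact: UC_valid|].
Qed.

Lemma LTE_FL_ge0 : 0 <= LTE_FL.
Proof. exact: le_trans LTE_UC_ge0 LTE_UC_le_FL. Qed.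

Lemma LTE_UC_div_FL_le_stay : (0 < K)%N ->
  0 <= LTE_UC / LTE_FL <= `[< K_creators_stay K abar ebar ut ct >]%:R.
Proof.
move=> K_gt0; case: (pselect (K_creators_stay K abar ebar ut ct)) => [stay|not_stay].
  rewrite asboolT // divr_ge0 ?LTE_FL_ge0 ?LTE_UC_ge0 //=.
  have [->|FL_gt0] := eqVneq LTE_FL 0; first by rewrite invr0 mulr0.
  by rewrite ler_pdivrMr ?mul1r ?LTE_UC_le_FL // lt0r FL_gt0 LTE_FL_ge0.
by rewrite asboolF // LTE_UC_eq0 // mul0r lexx.
Qed.

End NonnegativeAffinity.

End Dynamics.

Lemma measurable_inv (R : realType) : measurable_fun setT (@GRing.inv R).
Proof.
have -> : [set: R] = [set 0] `|` [set x | x != 0].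
  by apply/seteqP; split => // x _; case: (eqVneq x 0) => [->|x0]; [left|right].
have nonzero_m : measurable [set x : R | x != 0].
  by apply: open_measurable; exact: open_neq.
apply/(measurable_funU _ (measurable_set1 0) nonzero_m).
split; first exact: measurable_fun_set1.
apply: open_continuous_measurable_fun; first exact: open_neq.
by move=> x; rewrite inE => /inv_continuous.
Qed.

Section FiniteValuedMeasurability.
Context {d : measure_display} {Omega : measurableType d}.

Definition measurable_fibers {T : finType} (phi : Omega -> T) :=
  forall x, measurable (phi @^-1` [set x]).

Lemma measurable_fibers_preimage {T : finType} {phi : Omega -> T} (A : set T) :
  measurable_fibers phi -> measurable (phi @^-1` A).
Proof.
move=> phi_m; have -> : phi @^-1` A = \bigcup_(x in A) phi @^-1` [set x].
  apply/seteqP; split => [w Aw|w [x Ax]]; first by exists (phi w).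
  by rewrite /preimage /= => ->.
apply: fin_bigcup_measurable => [|x _]; [exact: finite_finset|exact: phi_m].
Qed.

Lemma measurable_factor {T : finType} {b : Omega -> T} {S : set Omega} :
  measurable_fibers b -> (forall w w', b w = b w' -> S w -> S w') -> measurable S.
Proof.
move=> b_m b_S; have -> : S = b @^-1` (b @` S).
  by apply/seteqP; split => [w Sw|w [w' Sw' bw']]; [exists w|exact: b_S Sw'].
exact: measurable_fibers_preimage.
Qed.

Lemma measurable_fibers_factor {T T' : finType} {b : Omega -> T} {phi : Omega -> T'} :
  measurable_fibers b -> (forall w w', b w = b w' -> phi w = phi w') ->
  measurable_fibers phi.
Proof.
by move=> b_m b_phi y; apply: (measurable_factor b_m) => w w' /b_phi /= ->.
Qed.

Lemma measurable_fibers_pair {T T' : finType} {p1 : Omega -> T} {p2 : Omega -> T'} :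
  measurable_fibers p1 -> measurable_fibers p2 ->
  measurable_fibers (fun w => (p1 w, p2 w)).
Proof.
move=> p1_m p2_m [x y]; have -> : (fun w => (p1 w, p2 w)) @^-1` [set (x, y)] =
    p1 @^-1` [set x] `&` p2 @^-1` [set y].
  by apply/seteqP; split => w /=; [case=> -> ->|case=> -> ->].
exact: measurableI.
Qed.

Lemma measurable_forall_fin {I : finType} (E : I -> set Omega) :
  (forall p, measurable (E p)) -> measurable [set w | forall p, E p w].
Proof.
move=> E_m; have -> : [set w | forall p, E p w] = \bigcap_(p in setT) E p.
  by apply/seteqP; split => [w Ew p _|w Ew p]; [exact: Ew|exact: Ew].
by apply: fin_bigcap_measurable => [|p _]; [exact: finite_finset|exact: E_m].
Qed.

Lemma measurable_fibers_ffun {I : finType} (B : Omega -> I -> bool) :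
  (forall p, measurable [set w | B w p]) ->
  measurable_fibers (fun w => [ffun p => B w p]).
Proof.
move=> B_m f; have -> : (fun w => [ffun p => B w p]) @^-1` [set f] =
    [set w | forall p, B w p = f p].
  apply/seteqP; split => [w /= <- p|w /= Bf]; first by rewrite ffunE.
  by apply/ffunP => p; rewrite ffunE Bf.
apply: measurable_forall_fin => p; case: (f p); first exact: B_m.
rewrite (_ : (fun w => _ = false) = ~` [set w | B w p]); first exact/measurableC/B_m.
by apply/seteqP; split => w /=; [move=> ->|move/negP/negbTE].
Qed.

Context {R : realType}.

Lemma measurable_fun_fin_comp {T : finType} {phi : Omega -> T} {F : T -> Omega -> R} :
  measurable_fibers phi -> (forall x, measurable_fun setT (F x)) ->
  measurable_fun setT (fun w => F (phi w) w).
Proof.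
move=> phi_m F_m _ Y mY; rewrite setTI.
have -> : (fun w => F (phi w) w) @^-1` Y =
    \bigcup_(x in setT) (phi @^-1` [set x] `&` F x @^-1` Y).
  by apply/seteqP; split => [w Yw|w [x _ [/= <-]]] //; exists (phi w).
apply: fin_bigcup_measurable => [|x _]; first exact: finite_finset.
by apply: measurableI => //; rewrite -[F x @^-1` Y]setTI; exact: F_m.
Qed.

Lemma measurable_sum_in {I : finType} (A : {pred I}) (f : I -> Omega -> R) :
  (forall j, measurable_fun setT (f j)) ->
  measurable_fun setT (fun w => \sum_(j in A) f j w).
Proof.
move=> f_m; under eq_fun do rewrite big_mkcond.
by apply: measurable_sum => j; case: (j \in A).
Qed.

Lemma measurable_set_ler {f g : Omega -> R} :
  measurable_fun setT f -> measurable_fun setT g -> measurable [set w | f w <= g w].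
Proof.
move=> f_m g_m; rewrite -[X in measurable X]setTI -preimage_true.
exact: measurable_fun_ler.
Qed.

Lemma measurable_set_ltr {f g : Omega -> R} :
  measurable_fun setT f -> measurable_fun setT g -> measurable [set w | f w < g w].
Proof.
move=> f_m g_m; rewrite -[X in measurable X]setTI -preimage_true.
exact: measurable_fun_ltr.
Qed.

Lemma measurable_set_eqr {f g : Omega -> R} :
  measurable_fun setT f -> measurable_fun setT g -> measurable [set w | f w = g w].
Proof.
move=> f_m g_m; have -> : [set w | f w = g w] = (fun w => f w == g w) @^-1` [set true].
  by apply/seteqP; split => w /= /eqP.
by rewrite -[X in measurable X]setTI; exact: measurable_fun_eqr.
Qed.

Lemma measurable_fun_from_gt (f : Omega -> R) :
  (forall c, measurable [set w | c < f w]) -> measurable_fun setT f.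
Proof.
move=> f_gt; apply: (measurability _ (RGenOInfty.measurableE R)).
by move=> _ [_ [c ->] <-]; rewrite setTI preimage_itvoy.
Qed.

End FiniteValuedMeasurability.

(* The dynamics and UC depend on the types only through these comparisons. *)
Definition affinity_profile {R : realType} {D U C : nat} (ebar : R)
    (ut : 'I_U -> D.-tuple R) (ct : 'I_C -> D.-tuple R) :=
  ([ffun p : 'I_U * 'I_C => ebar <= dotp (ut p.1) (ct p.2)],
   [ffun p : 'I_U * {set 'I_C} * {set 'I_C} =>
      \sum_(j in p.2) dotp (ut p.1.1) (ct j) <= \sum_(j in p.1.2) dotp (ut p.1.1) (ct j)]).

Section ProfileInvariance.
Context {R : realType} {D U C K abar : nat} {ebar : R}.
Context {ut ut' : 'I_U -> D.-tuple R} {ct ct' : 'I_C -> D.-tuple R}.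
Hypothesis same_profile : affinity_profile ebar ut ct = affinity_profile ebar ut' ct'.

Let same_threshold i j :
  (ebar <= dotp (ut i) (ct j)) = (ebar <= dotp (ut' i) (ct' j)).
Proof. by have [/ffunP/(_ (i, j))] := same_profile; rewrite !ffunE. Qed.

Let same_gain_order i (S S' : {set 'I_C}) :
  (\sum_(j in S') dotp (ut i) (ct j) <= \sum_(j in S) dotp (ut i) (ct j)) =
  (\sum_(j in S') dotp (ut' i) (ct' j) <= \sum_(j in S) dotp (ut' i) (ct' j)).
Proof. by have [_ /ffunP/(_ (i, S, S'))] := same_profile; rewrite !ffunE. Qed.

Lemma step_profile s r : step K abar ebar ut ct s r = step K abar ebar ut' ct' s r.
Proof.
congr (_, _); apply/setP => i; rewrite !inE.
by congr (_ && (_ && _)); apply: eq_forallb => j; rewrite same_threshold.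
Qed.

Lemma traj_profile rs t : traj K abar ebar ut ct rs t = traj K abar ebar ut' ct' rs t.
Proof. by elim: t => [//|t IHt] /=; rewrite IHt step_profile. Qed.

Lemma valid_seq_profile rs :
  valid_seq K abar ebar ut ct rs -> valid_seq K abar ebar ut' ct' rs.
Proof. by move=> rs_valid t; rewrite -traj_profile; exact: rs_valid. Qed.

Lemma uc_recom_profile s : uc_recom K ut ct s = uc_recom K ut' ct' s.
Proof.
apply/funext => i; congr odflt; apply: eq_pick => S.
by congr (_ && (_ && _)); apply: eq_forallb => S'; rewrite same_gain_order.
Qed.

Lemma uc_state_profile t : uc_state K abar ebar ut ct t = uc_state K abar ebar ut' ct' t.
Proof. by elim: t => [//|t IHt] /=; rewrite IHt uc_recom_profile step_profile. Qed.

Lemma K_creators_stay_profile :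
  K_creators_stay K abar ebar ut ct -> K_creators_stay K abar ebar ut' ct'.
Proof. by rewrite /K_creators_stay uc_recom_profile step_profile. Qed.

End ProfileInvariance.

Lemma nonneg_unit_measurable {R : realType} {D : nat} :
  measurable (nonneg_unit : set (D.-tuple R)).
Proof.
apply: measurableI.
  by apply: measurable_forall_fin => k; apply: measurable_set_ler => //; exact: measurable_tnth.
apply: measurable_set_eqr => //; apply: measurable_sum => k.
by apply: measurable_funX; exact: measurable_tnth.
Qed.

Section AlmostSure.
Context {d : measure_display} {Omega : measurableType d} {R : realType}.
Variable P : probability Omega R.

Lemma ae_of_law_eq1 {d'} {T : measurableType d'} (X : Omega -> T) (A : set T) :
  measurable_fun setT X -> measurable A -> P (X @^-1` A) = 1%E ->
  {ae P, forall w, A (X w)}.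
Proof.
move=> X_m A_m PA1; exists (X @^-1` ~` A); split => //.
- by rewrite -[X in measurable X]setTI; apply: X_m => //; exact: measurableC.
- have XA_m : measurable (X @^-1` A) by rewrite -[X in measurable X]setTI; exact: X_m.
  by rewrite preimage_setC probability_setC // PA1 subee.
Qed.

Lemma ae_prob1 {A : set Omega} : measurable A -> {ae P, forall w, A w} -> P A = 1%E.
Proof.
move=> A_m A_ae; have := probability_setC P (measurableC A_m).
by rewrite setCK (measure_negligible (measurableC A_m) A_ae) sube0.
Qed.

Lemma prob_gt0E {f : Omega -> R} : measurable_fun setT f ->
  {ae P, forall w, 0 <= f w} ->
  fine (P [set w | 0 < f w]) = 1 - fine (P [set w | f w = 0]).
Proof.
move=> f_m f_ge0.
have gt0_m : measurable [set w | 0 < f w] by apply: measurable_set_ltr.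
have eq0_m : measurable [set w | f w = 0] by apply: measurable_set_eqr.
have ge0_split : [set w | 0 <= f w] = [set w | 0 < f w] `|` [set w | f w = 0].
  apply/seteqP; split => w /=; last by case=> [/ltW|->].
  by rewrite le_eqVlt => /orP [/eqP ->|]; [right|left].
have disjoint : [set w | 0 < f w] `&` [set w | f w = 0] = set0.
  by apply/seteqP; split => // w [/= + f0]; rewrite f0 ltxx.
have ge0_m : measurable [set w | 0 <= f w] by apply: measurable_set_ler.
have /(congr1 fine) := ae_prob1 ge0_m f_ge0.
rewrite ge0_split measureU // fineD ?fin_num_measure //= => <-.
by rewrite addrK.
Qed.

Lemma expectation_le_prob (f : Omega -> R) (S : set Omega) :
  measurable S -> measurable_fun setT f ->
  {ae P, forall w, 0 <= f w <= \1_S w} -> ('E_P[f] <= P S)%E.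
Proof.
move=> S_m f_m [N [N_m PN0 bad_N]].
pose g w := f w * \1_(~` N) w.
have g_m : measurable_fun setT g.
  by apply: measurable_funM => //; exact/measurable_indic/measurableC.
have g_bound w : 0 <= g w <= \1_S w.
  rewrite /g indicE; case: (boolP (w \in ~` N)) => [/set_mem wN|_].
    by rewrite mulr1; apply: contrapT => /bad_N.
  by rewrite mulr0 lexx /= indicE ler0n.
rewrite -(expectation_indic P S_m) unlock.
rewrite (ae_eq_integral (fun w => (g w)%:E)) //.
- apply: ge0_le_integral => //.
  + by move=> w _; rewrite lee_fin; case/andP: (g_bound w).
  + exact/measurable_EFinP.
  + exact/measurable_EFinP/measurable_indic.
  + by move=> w _; rewrite lee_fin; case/andP: (g_bound w).
- exact/measurable_EFinP.
- exact/measurable_EFinP.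
- exists N; split => // w /= fg; apply: contrapT => wN; apply: fg => _.
  by rewrite /g indicE mem_set // mulr1.
Qed.

End AlmostSure.

Section RandomTypes.
Context {R : realType} {D U C : nat} {dO : measure_display} {Omega : measurableType dO}.
Context {P : probability Omega R} {DU DC : probability (D.-tuple R) R}.
Context {us : 'I_U -> Omega -> D.-tuple R} {cs : 'I_C -> Omega -> D.-tuple R}.
Variables (K abar : nat) (ebar : R).
Hypothesis us_m : forall i, measurable_fun setT (us i).
Hypothesis cs_m : forall j, measurable_fun setT (cs j).
Hypothesis us_law : forall i A, measurable A -> P (us i @^-1` A) = DU A.
Hypothesis cs_law : forall j A, measurable A -> P (cs j @^-1` A) = DC A.
Hypothesis DU_unit : DU nonneg_unit = 1%E.
Hypothesis DC_unit : DC nonneg_unit = 1%E.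

Local Notation utw w := (fun i => us i w).
Local Notation ctw w := (fun j => cs j w).
Local Notation profile w := (affinity_profile ebar (utw w) (ctw w)).
Local Notation fl w := (LTE_FL K abar ebar (utw w) (ctw w)).
Local Notation uc w := (LTE_UC K abar ebar (utw w) (ctw w)).
Local Notation stay := [set w | K_creators_stay K abar ebar (utw w) (ctw w)].

Lemma dotp_measurable i j : measurable_fun setT (fun w => dotp (us i w) (cs j w)).
Proof.
apply: measurable_sum => k; apply: measurable_funM.
- exact: measurableT_comp (measurable_tnth k) (us_m i).
- exact: measurableT_comp (measurable_tnth k) (cs_m j).
Qed.

Lemma profile_measurable_fibers : measurable_fibers (fun w => profile w).
Proof.
apply: measurable_fibers_pair; apply: measurable_fibers_ffun => p.
- by apply: measurable_set_ler => //; exact: dotp_measurable.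
- by apply: measurable_set_ler; apply: measurable_sum_in => j; exact: dotp_measurable.
Qed.

Lemma engagement_measurable s r :
  measurable_fun setT (fun w => engagement (utw w) (ctw w) s r).
Proof.
apply: (measurable_sum_in _ (fun i w => \sum_(j in r i) dotp (us i w) (cs j w))) => i.
by apply: measurable_sum_in => j; exact: dotp_measurable.
Qed.

Lemma LTE_measurable (rs : Omega -> nat -> recom U C) :
  (forall t, measurable_fibers (fun w =>
     (traj K abar ebar (utw w) (ctw w) (rs w) t, [ffun i => rs w t i]))) ->
  (forall w, cvg (avg_eng K abar ebar (utw w) (ctw w) (rs w) @ \oo)) ->
  measurable_fun setT (fun w => LTE K abar ebar (utw w) (ctw w) (rs w)).
Proof.
move=> state_m avg_cvg.
apply: (measurable_fun_cvg (h := fun T w => avg_eng K abar ebar (utw w) (ctw w) (rs w) T)).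
  move=> T; apply: measurable_funM => //; apply: measurable_sum => t.
  have := measurable_fun_fin_comp (state_m t)
    (fun x => engagement_measurable x.1 (fun i => x.2 i)).
  apply: eq_measurable_fun => w _ /=.
  by congr engagement; apply/funext => i; rewrite ffunE.
by move=> w _; exact: avg_cvg.
Qed.

Lemma LTE_code_measurable (q : rcode U C) :
  measurable_fun setT (fun w => LTE K abar ebar (utw w) (ctw w) (code_seq q)).
Proof.
apply: (LTE_measurable (fun _ => code_seq q)) => [t|w].
  apply: (measurable_fibers_factor profile_measurable_fibers) => w w' same.
  by rewrite (traj_profile same).
by have [t1 [cv _]] := code_seq_LTE K abar ebar (utw w) (ctw w) q; exact: cvgP cv.
Qed.

Lemma LTE_UC_measurable :
  measurable_fun setT (fun w => LTE_UC K abar ebar (utw w) (ctw w)).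
Proof.
apply: (LTE_measurable (fun w => UC_seq K abar ebar (utw w) (ctw w))) => [t|w].
  apply: (measurable_fibers_factor profile_measurable_fibers) => w w' same.
  have -> : UC_seq K abar ebar (utw w) (ctw w) = UC_seq K abar ebar (utw w') (ctw w').
    by apply/funext => k; rewrite /Defs.UC_seq (uc_state_profile same) (uc_recom_profile same).
  by rewrite (traj_profile same).
by have [t1 [cv _]] := LTE_UC_eventual K abar ebar (utw w) (ctw w); exact: cvgP cv.
Qed.

Lemma valid_code_measurable (q : rcode U C) :
  measurable [set w | valid_seq K abar ebar (utw w) (ctw w) (code_seq q)].
Proof.
apply: (measurable_factor profile_measurable_fibers) => w w' same.
exact: valid_seq_profile.
Qed.

Lemma K_creators_stay_measurable :
  measurable [set w | K_creators_stay K abar ebar (utw w) (ctw w)].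
Proof.
apply: (measurable_factor profile_measurable_fibers) => w w' same.
exact: K_creators_stay_profile.
Qed.

Lemma LTE_FL_measurable :
  measurable_fun setT (fun w => LTE_FL K abar ebar (utw w) (ctw w)).
Proof.
apply: measurable_fun_from_gt => c.
pose valid q := [set w | valid_seq K abar ebar (utw w) (ctw w) (@code_seq U C q)].
have -> : [set w | c < LTE_FL K abar ebar (utw w) (ctw w)] =
    ([set _ | c < 0] `&` ~` \bigcup_q valid q) `|`
    \bigcup_q (valid q `&` [set w | c < LTE K abar ebar (utw w) (ctw w) (code_seq q)]).
  apply/seteqP; split => w; first case/LTE_FL_gt => [[c0 no_code]|[q ? ?]].
  - by left; split=> // -[q _ /no_code].
  - by right; exists q.
  move=> FL_gt; apply/LTE_FL_gt; case: FL_gt => [[c0 no_code]|[q _ [? ?]]].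
  - by left; split=> // q ?; apply: no_code; exists q.
  - by right; exists q.
have code_countable : countable [set: rcode U C] by exact: countableP.
apply: measurableU; first apply: measurableI.
- by case: (c < 0); [rewrite set_true|rewrite set_false].
- by apply/measurableC/countable_bigcupT_measurable => // q; exact: valid_code_measurable.
- apply: countable_bigcupT_measurable => // q; apply: measurableI.
    exact: valid_code_measurable.
  by apply: measurable_set_ltr => //; exact: LTE_code_measurable.
Qed.

Lemma LTE_ratio_measurable :
  measurable_fun setT (fun w => uc w / fl w * \1_[set w | 0 < fl w] w).
Proof.
have fl_m := LTE_FL_measurable.
apply: measurable_funM; last exact/measurable_indic/measurable_set_ltr.
apply: measurable_funM; first exact: LTE_UC_measurable.
exact: measurableT_comp (measurable_inv R) fl_m.
Qed.

Lemma ae_dotp_ge0 : {ae P, forall w, forall i j, 0 <= dotp (us i w) (cs j w)}.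
Proof.
have NU_m := @nonneg_unit_measurable R D.
have us_unit : {ae P, forall w, forall i, nonneg_unit (us i w)}.
  by apply: filter_forall => i; apply: ae_of_law_eq1; rewrite ?us_law.
have cs_unit : {ae P, forall w, forall j, nonneg_unit (cs j w)}.
  by apply: filter_forall => j; apply: ae_of_law_eq1; rewrite ?cs_law.
move: us_unit cs_unit; apply: filterS2 => w us_nu cs_nu i j.
by apply: sumr_ge0 => k _; apply: mulr_ge0; [exact: (us_nu i).1|exact: (cs_nu j).1].
Qed.

Lemma ae_LTE_FL_ge0 : {ae P, forall w, 0 <= fl w}.
Proof. by move: ae_dotp_ge0; apply: filterS => w /LTE_FL_ge0. Qed.

Lemma ae_LTE_ratio_le_stay : (0 < K)%N ->
  {ae P, forall w, 0 <= uc w / fl w * \1_[set w | 0 < fl w] w <= \1_stay w}.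
Proof.
move=> K_gt0; move: ae_dotp_ge0; apply: filterS => w w_ge0.
have := LTE_UC_div_FL_le_stay K abar ebar _ _ w_ge0 K_gt0; rewrite !indicE.
by case: (w \in _); rewrite ?mulr1 // mulr0 lexx ler0n.
Qed.

End RandomTypes.

Theorem corollary3 (R : realType) (D U C K abar : nat) (ebar : R)
  (dO : measure_display) (Omega : measurableType dO) (P : probability Omega R)
  (DU DC : probability (D.-tuple R) R)
  (us : 'I_U -> Omega -> D.-tuple R) (cs : 'I_C -> Omega -> D.-tuple R) :
  (0 < K)%N -> 0 <= ebar <= 1 ->
  DU nonneg_unit = 1%E -> DC nonneg_unit = 1%E ->
  (forall i, measurable_fun setT (us i)) ->
  (forall j, measurable_fun setT (cs j)) ->
  (forall i A, measurable A -> P (us i @^-1` A) = DU A) ->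
  (forall j A, measurable A -> P (cs j @^-1` A) = DC A) ->
  mutually_independent P
    (fun k : 'I_U + 'I_C => match k with inl i => us i | inr j => cs j end) ->
  (K <= C)%N -> (abar <= U)%N ->
  let fl := fun w => LTE_FL K abar ebar (fun i => us i w) (fun j => cs j w) in
  let uc := fun w => LTE_UC K abar ebar (fun i => us i w) (fun j => cs j w) in
  let eps := fine (P [set w | fl w = 0]) in
  eps < 1 ->
  (cond_expectation P (fun w => (uc w / fl w)%R) [set w | (0 < fl w)%R]
   <= ((1 - eps)^-1)%:E
      * P [set w | K_creators_stay K abar ebar (fun i => us i w) (fun j => cs j w)])%E.
Proof.
move=> K_gt0 _ DU_unit DC_unit us_m cs_m us_law cs_law _ _ _ fl uc eps eps_lt1.
have fl_m : measurable_fun setT fl := LTE_FL_measurable K abar ebar us_m cs_m.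
have fl_ge0 := ae_LTE_FL_ge0 K abar ebar us_m cs_m us_law cs_law DU_unit DC_unit.
have ratio_le_stay : ('E_P[fun w => (uc w / fl w * \1_[set w | 0 < fl w] w)%R] <=
    P [set w | K_creators_stay K abar ebar (fun i => us i w) (fun j => cs j w)])%E.
  apply: expectation_le_prob.
  - exact: K_creators_stay_measurable K abar ebar us_m cs_m.
  - exact: LTE_ratio_measurable K abar ebar us_m cs_m.
  - exact: ae_LTE_ratio_le_stay K abar ebar us_m cs_m us_law cs_law DU_unit DC_unit K_gt0.
rewrite /cond_expectation (prob_gt0E P fl_m fl_ge0) muleC.
by apply: lee_wpmul2l ratio_le_stay; rewrite lee_fin invr_ge0 subr_ge0 ltW.
Qed.
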